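(* Fix integers $d,n$ with $2\leq n\leq d+1$, and real numbers $\tau,c>0$. Every $n$-point configuration $X=\{x_i\}_{i\in[n]}$ in the unit sphere $S^{d-1}\subseteq\mathbb{R}^d$ that minimizes $\mathcal{L}_{\tau,c}(X):=\sum_{k=1}^n\log\big(c+\sum_{j\neq k}\exp(\langle x_j,x_k\rangle/\tau)\big)$ satisfies $\sum_{i=1}^n x_i=0$ and $\langle x_i,x_j\rangle=-\frac{1}{n-1}$ for all $i\neq j$ in $[n]$.
   Context: $[n]=\{1,\ldots,n\}$; minimization is over all $n$-point configurations in $S^{d-1}$. *)

From HB Require Import structures.
From mathcomp Require Import all_boot all_order all_algebra.
From mathcomp Require Import all_classical all_reals all_analysis.
Set Implicit Arguments. Unset Strict Implicit. Unset Printing Implicit Defensive.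
Import Order.TTheory GRing.Theory Num.Theory.
Local Open Scope ring_scope.

Definition dotp (R : realType) (d : nat) (x y : 'rV[R]_d) : R :=
  \sum_(l < d) x ord0 l * y ord0 l.

Definition on_sphere (R : realType) (d : nat) (x : 'rV[R]_d) : Prop :=
  dotp x x = 1.

Definition sphere_config (R : realType) (d n : nat) (X : 'I_n -> 'rV[R]_d) : Prop :=
  forall i, on_sphere (X i).

Definition loss (R : realType) (d n : nat) (tau c : R) (X : 'I_n -> 'rV[R]_d) : R :=
  \sum_(k < n) ln (c + \sum_(j < n | j != k) expR (dotp (X j) (X k) / tau)).

From HB Require Import structures.
From mathcomp Require Import all_boot all_order all_algebra.
From mathcomp Require Import all_classical all_reals all_analysis.
From mathcomp Require Import ring.
Import Order.TTheory GRing.Theory Num.Theory.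
Local Open Scope ring_scope.

(* Put M = n - 1, a_kj = <x_j, x_k> / tau and let t_k be the mean of the a_kj
   over j <> k.  By convexity of exp (Jensen), the k-th term of the loss is at
   least g(t_k) with g(t) = log (c + M e^t), and since g is convex it is at
   least g(t0) + g'(t0) (t_k - t0) for t0 = -1 / (M tau).  On the sphere
   t_k - t0 = <S, x_k> / (M tau) with S the sum of the points, so summing over
   k gives  L(X) >= n g(t0) + g'(t0) |S|^2 / (M tau).  A regular simplex, which
   fits in R^d because n <= d + 1, attains n g(t0).  Hence at a minimiser every
   inequality is an equality: S = 0, so t_k = t0, and the equality case of
   Jensen forces every a_kj to equal t0. *)

Section ExpMean.
Variables (R : realType) (I : finType) (P : pred I) (a : I -> R).
Hypothesis P_gt0 : (0 < #|P|)%N.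

Let N : R := #|P|%:R.
Let t : R := (\sum_(j | P j) a j) / N.

Lemma sum_expR_mean_split :
  \sum_(j | P j) expR (a j) =
  N * expR t + expR t * \sum_(j | P j) (expR (a j - t) - (1 + (a j - t))).
Proof.
have N_neq0 : N != 0 by rewrite pnatr_eq0 -lt0n.
have dev0 : \sum_(j | P j) (a j - t) = 0.
  by rewrite sumrB sumr_const -mulr_natr /t mulfVK ?subrr.
rewrite sumrB big_split /= dev0 addr0 sumr_const mulrBr mulr_sumr.
rewrite [X in _ - X]mulrC addrC subrK.
by apply: eq_bigr => j _; rewrite -expRD subrKC.
Qed.

Lemma mean_expR_le_sum : N * expR t <= \sum_(j | P j) expR (a j).
Proof.
rewrite sum_expR_mean_split lerDl mulr_ge0 ?expR_ge0 //.
by apply: sumr_ge0 => j _; rewrite subr_ge0 expR_ge1Dx.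
Qed.

Lemma mean_expR_eq_sum : \sum_(j | P j) expR (a j) = N * expR t ->
  forall j, P j -> a j = t.
Proof.
have dev_ge0 j : 0 <= expR (a j - t) - (1 + (a j - t)).
  by rewrite subr_ge0 expR_ge1Dx.
rewrite sum_expR_mean_split -[RHS]addr0 => /addrI /eqP.
rewrite mulf_eq0 gt_eqF ?expR_gt0 //= => /eqP /(psumr_eq0P (fun j _ => dev_ge0 j)).
move=> dev0 j /dev0 /eqP; apply: contraTeq; rewrite -subr_eq0.
by move=> /expR_gt1Dx; rewrite subr_eq0 => /gt_eqF ->.
Qed.

End ExpMean.

Lemma expR_mul_le_conv (R : realType) (p u : R) : 0 <= p <= 1 ->
  expR (p * u) <= 1 - p + p * expR u.
Proof.
move=> /andP[p_ge0 p_le1].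
have := convex_expR (Itv01 p_ge0 p_le1) u 0.
by rewrite !convRE /= mulr0 addr0 expR0 mulr1 addrC.
Qed.

Lemma ln_addr_expR_tangent_le (R : realType) (c A t0 t : R) : 0 < c -> 0 < A ->
  ln (c + A * expR t0) + A * expR t0 / (c + A * expR t0) * (t - t0)
  <= ln (c + A * expR t).
Proof.
move=> c_gt0 A_gt0.
set K := c + A * expR t0; set p := A * expR t0 / K.
have K_gt0 : 0 < K by rewrite addr_gt0 ?mulr_gt0 ?expR_gt0.
have p_ge0 : 0 <= p by rewrite divr_ge0 ?mulr_ge0 ?expR_ge0 ?ltW.
have p_le1 : p <= 1 by rewrite ler_pdivrMr // mul1r lerDr ltW.
have KE : c + A * expR t = K * (1 - p + p * expR (t - t0)).
  by rewrite /p expRB /K; field; rewrite gt_eqF ?expR_gt0 //= gt_eqF.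
rewrite -[p * _]expRK -lnM ?posrE ?expR_gt0 // ler_ln ?posrE ?mulr_gt0 ?expR_gt0 //.
  by rewrite KE ler_pM2l // expR_mul_le_conv ?p_ge0.
by rewrite addr_gt0 ?mulr_gt0 ?expR_gt0.
Qed.

Section Dotp.
Variables (R : realType) (d : nat).
Implicit Types x y z : 'rV[R]_d.

Lemma dotpC x y : dotp x y = dotp y x.
Proof. by apply: eq_bigr => l _; rewrite mulrC. Qed.

Lemma dotpDl x y z : dotp (x + y) z = dotp x z + dotp y z.
Proof. by rewrite -big_split; apply: eq_bigr => l _; rewrite mxE mulrDl. Qed.

Lemma dotpZl (a : R) x y : dotp (a *: x) y = a * dotp x y.
Proof. by rewrite mulr_sumr; apply: eq_bigr => l _; rewrite mxE mulrA. Qed.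

Lemma dotpDr x y z : dotp x (y + z) = dotp x y + dotp x z.
Proof. by rewrite dotpC dotpDl !(dotpC x). Qed.

Lemma dotpZr (a : R) x y : dotp x (a *: y) = a * dotp x y.
Proof. by rewrite dotpC dotpZl dotpC. Qed.

Lemma dotp0l y : dotp 0 y = 0.
Proof. by rewrite -(scale0r 0) dotpZl mul0r. Qed.

Lemma dotp_suml (I : finType) (x : I -> 'rV[R]_d) y :
  dotp (\sum_i x i) y = \sum_i dotp (x i) y.
Proof. by elim/big_rec2: _ => [|i s t _ <-]; rewrite ?dotp0l ?dotpDl. Qed.

Lemma dotpp_ge0 x : 0 <= dotp x x.
Proof. by apply: sumr_ge0 => l _; rewrite -expr2 sqr_ge0. Qed.

Lemma dotpp_eq0 x : (dotp x x == 0) = (x == 0).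
Proof.
apply/idP/eqP => [|->]; last by rewrite dotp0l.
rewrite psumr_eq0 => [/allP x0|l _]; last by rewrite -expr2 sqr_ge0.
apply/rowP => l; rewrite mxE; apply/eqP.
by rewrite -sqrf_eq0 expr2; apply: x0; rewrite mem_index_enum.
Qed.

End Dotp.

Lemma sum_ord_delta (R : nzSemiRingType) (d i : nat) (F : nat -> R) :
  \sum_(l < d) (l == i :> nat)%:R * F l = if (i < d)%N then F i else 0.
Proof.
rewrite -(big_ord1_eq (@GRing.add R)) [RHS]big_mkcond /=.
by apply: eq_bigr => l _; rewrite mulr_natl mulrb.
Qed.

Section RegularSimplex.
Variable R : realType.
Context {d n : nat}.
Hypotheses (n_gt1 : (1 < n)%N) (n_le : (n <= d.+1)%N).

Let m := n.-1.
Let M : R := m%:R.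
Let e (i : nat) : 'rV[R]_d := \row_l (l == i :> nat)%:R.
Let w : 'rV[R]_d := \row_l (l < m)%:R.

Let m_gt0 : (0 < m)%N. Proof. by rewrite /m -ltnS prednK // ltnW. Qed.
Let m_le : (m <= d)%N. Proof. by rewrite /m -ltnS prednK // ltnW. Qed.
Let M_gt0 : 0 < M. Proof. by rewrite ltr0n. Qed.

Let dotp_ee i j : (i < m)%N -> dotp (e i) (e j) = (i == j)%:R.
Proof.
move=> im; rewrite /dotp
  (eq_bigr (fun l : 'I_d => (l == i :> nat)%:R * (l == j :> nat)%:R)).
  by rewrite (sum_ord_delta _ _ _ (fun l => (l == j)%:R)) (leq_trans im m_le).
by move=> l _; rewrite !mxE.
Qed.

Let dotp_ew i : (i < m)%N -> dotp (e i) w = 1.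
Proof.
move=> im; rewrite /dotp
  (eq_bigr (fun l : 'I_d => (l == i :> nat)%:R * (l < m)%:R)).
  by rewrite (sum_ord_delta _ _ _ (fun l => (l < m)%:R)) (leq_trans im m_le) im.
by move=> l _; rewrite !mxE.
Qed.

Let dotp_ww : dotp w w = M.
Proof.
rewrite /dotp (eq_bigr (fun l : 'I_d => (l < m)%:R * (l < m)%:R)); last first.
  by move=> l _; rewrite !mxE.
under eq_bigr do rewrite mulr_natl mulrb.
rewrite -big_mkcond /= (eq_bigr (fun=> 1)) => [|l ->] //.
by rewrite -(big_ord_widen _ (fun=> 1)) // sumr_const card_ord.
Qed.

(* The vertices are a e_i + b w (i < m) and g w.  Unit length and inner
   products -1/m amount to g^2 = 1/m, a^2 - g^2 = 1 and a + m b = -g. *)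
Let g : R := Num.sqrt M^-1.
Let a : R := Num.sqrt (1 + M^-1).
Let b : R := - (a + g) / M.

Let g2 : g ^+ 2 = M^-1. Proof. by rewrite sqr_sqrtr // invr_ge0 ltW. Qed.
Let a2 : a ^+ 2 = 1 + M^-1.
Proof. by rewrite sqr_sqrtr // addr_ge0 // invr_ge0 ltW. Qed.

Let simplex (i : 'I_n) : 'rV[R]_d :=
  if (i < m)%N then a *: e i + b *: w else g *: w.

Lemma regular_simplex_exists : exists Y : 'I_n -> 'rV[R]_d,
  sphere_config Y /\ forall i j, i != j -> dotp (Y i) (Y j) = - M^-1.
Proof.
have M_neq0 : M != 0 by rewrite gt_eqF.
have dotp_aw i j : (i < m)%N -> (j < m)%N ->
    dotp (a *: e i + b *: w) (a *: e j + b *: w)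
    = a ^+ 2 * (i == j)%:R + 2 * a * b + M * b ^+ 2.
  move=> im jm; rewrite !(dotpDl, dotpDr, dotpZl, dotpZr) dotp_ee // dotp_ew //.
  by rewrite dotpC dotp_ew // dotp_ww; ring.
have dotp_awg i : (i < m)%N -> dotp (a *: e i + b *: w) (g *: w) = g * (a + M * b).
  by move=> im; rewrite !(dotpDl, dotpZl, dotpZr) dotp_ew // dotp_ww; ring.
have dotp_gw : dotp (g *: w) (g *: w) = M * g ^+ 2.
  by rewrite dotpZl dotpZr dotp_ww; ring.
have aMb : a + M * b = - g by rewrite /b mulrC divfK // opprD addNKr.
have cross : 2 * a * b + M * b ^+ 2 = - M^-1.
  transitivity (- (a ^+ 2 - g ^+ 2) / M); first by rewrite /b; field.
  by rewrite a2 g2 addrK mulN1r.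
have last_index (i : 'I_n) : ~~ (i < m)%N -> i = m :> nat.
  move=> im; apply/eqP; rewrite eqn_leq [(m <= _)%N]leqNgt im andbT.
  by rewrite -ltnS prednK ?ltn_ord // ltnW.
exists simplex; split=> [i | i j ij]; rewrite /simplex.
  case: ifP => im; rewrite /on_sphere.
    by rewrite dotp_aw // eqxx mulr1 -addrA cross a2 addrK.
  by rewrite dotp_gw g2 mulfV.
case: ifP => im; case: ifP => jm.
- by rewrite dotp_aw // val_eqE (negbTE ij) mulr0 add0r.
- by rewrite dotp_awg // aMb mulrN -expr2 g2.
- by rewrite dotpC dotp_awg // aMb mulrN -expr2 g2.
- by move: ij; rewrite -val_eqE /= (last_index i) ?im // (last_index j) ?jm // eqxx.
Qed.

End RegularSimplex.

Definition simplex_loss {R : realType} (n : nat) (tau c : R) : R :=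
  ln (c + n.-1%:R * expR (- (n.-1%:R * tau)^-1)) *+ n.

Section SphereLoss.
Context {R : realType} {d n : nat} {tau c : R}.
Hypotheses (n_gt1 : (1 < n)%N) (tau_gt0 : 0 < tau) (c_gt0 : 0 < c).

Let M : R := n.-1%:R.
Let t0 : R := - (M * tau)^-1.
Let K : R := c + M * expR t0.
Let p : R := M * expR t0 / K.

Let M_gt0 : 0 < M. Proof. by rewrite ltr0n -ltnS prednK // ltnW. Qed.
Let K_gt0 : 0 < K. Proof. by rewrite addr_gt0 ?mulr_gt0 ?expR_gt0. Qed.
Let p_gt0 : 0 < p. Proof. by rewrite divr_gt0 ?mulr_gt0 ?expR_gt0. Qed.

Let card_neq (k : 'I_n) : #|(fun j => j != k)| = n.-1.
Proof. by rewrite -[in RHS](card_ord n) -(cardC1 k); apply: eq_card. Qed.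

Let card_neq_gt0 (k : 'I_n) : (0 < #|(fun j => j != k)|)%N.
Proof. by rewrite card_neq -ltnS prednK // ltnW. Qed.

Lemma loss_regular_simplex (Y : 'I_n -> 'rV[R]_d) :
  (forall i j, i != j -> dotp (Y i) (Y j) = - M^-1) ->
  loss tau c Y = simplex_loss n tau c.
Proof.
move=> Yd; rewrite /loss /simplex_loss -[X in _ *+ X](card_ord n) -sumr_const.
apply: eq_bigr => k _.
rewrite (eq_bigr (fun=> expR t0)) => [|j jk]; last by rewrite Yd // /t0 invfM mulNr.
by rewrite sumr_const card_neq mulr_natl.
Qed.

Context {X : 'I_n -> 'rV[R]_d} (X_sphere : sphere_config X).

Let S := \sum_i X i.
Let a k j := dotp (X j) (X k) / tau.
Let mean k := (\sum_(j | j != k) a k j) / #|(fun j => j != k)|%:R.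

Lemma mean_dotE k : mean k = t0 + dotp S (X k) / (M * tau).
Proof.
rewrite /mean card_neq -/M -mulr_suml /t0.
have -> : \sum_(j | j != k) dotp (X j) (X k) = dotp S (X k) - 1.
  by rewrite dotp_suml [in RHS](bigD1 k) //= (X_sphere k : dotp _ _ = 1) addrC addrK.
by field; rewrite !gt_eqF.
Qed.

Lemma loss_term_ge k :
  ln K + p * (mean k - t0) <= ln (c + \sum_(j | j != k) expR (a k j)).
Proof.
have jensen := @mean_expR_le_sum R _ _ (a k) (card_neq_gt0 k).
rewrite -/(mean k) card_neq -/M in jensen.
apply: le_trans (@ln_addr_expR_tangent_le R c M t0 (mean k) c_gt0 M_gt0) _.
rewrite ler_ln ?posrE ?lerD2l // addr_gt0 ?mulr_gt0 ?expR_gt0 //.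
by rewrite (lt_le_trans _ jensen) ?mulr_gt0 ?expR_gt0.
Qed.

Lemma simplex_loss_le :
  simplex_loss n tau c + p * (dotp S S / (M * tau)) <= loss tau c X.
Proof.
have -> : simplex_loss n tau c + p * (dotp S S / (M * tau))
    = \sum_k (ln K + p * (mean k - t0)).
  rewrite big_split /= sumr_const card_ord -mulr_sumr; congr (_ + p * _).
  under eq_bigr do rewrite mean_dotE addrC addKr.
  by rewrite -mulr_suml {1}/S dotp_suml; under eq_bigr do rewrite dotpC.
by apply: ler_sum => k _; apply: loss_term_ge.
Qed.

Lemma loss_le_simplex_loss_regular : loss tau c X <= simplex_loss n tau c ->
  S = 0 /\ forall i j, i != j -> dotp (X i) (X j) = - M^-1.
Proof.
move=> loss_le.
have S0 : S = 0.
  apply/eqP; rewrite -dotpp_eq0 eq_le dotpp_ge0 andbT.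
  have := le_trans simplex_loss_le loss_le.
  by rewrite gerDl pmulr_rle0 // pmulr_lle0 // invr_gt0 mulr_gt0.
have mean_t0 k : mean k = t0 by rewrite mean_dotE S0 dotp0l mul0r addr0.
have gap_ge0 k : 0 <= ln (c + \sum_(j | j != k) expR (a k j)) - ln K.
  by have := loss_term_ge k; rewrite mean_t0 subrr mulr0 addr0 subr_ge0.
have gaps0 : \sum_k (ln (c + \sum_(j | j != k) expR (a k j)) - ln K) = 0.
  apply/eqP; rewrite eq_le sumr_ge0 ?andbT //.
  by rewrite sumrB sumr_const card_ord subr_le0.
have term_eq k : c + \sum_(j | j != k) expR (a k j) = K.
  apply: ln_inj; rewrite ?posrE //.
    by rewrite (lt_le_trans c_gt0) // lerDl sumr_ge0 // => j _; rewrite expR_ge0.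
  by apply/eqP; rewrite -subr_eq0 (psumr_eq0P (fun k _ => gap_ge0 k) gaps0).
split=> // i j ij.
have sum_eq : \sum_(l | l != j) expR (a j l) = M * expR t0.
  by apply: (addrI c); rewrite term_eq.
have := @mean_expR_eq_sum R _ _ (a j) (card_neq_gt0 j).
rewrite -/(mean j) card_neq -/M mean_t0 => /(_ sum_eq i ij) aji.
have tau_neq0 : tau != 0 by rewrite gt_eqF.
by rewrite -(divfK tau_neq0 (dotp _ _)) -/(a j i) aji /t0 invfM mulNr mulfVK.
Qed.

End SphereLoss.

Theorem lemma13 (R : realType) (d n : nat) (tau c : R)
  (hn2 : (2 <= n)%N) (hnd : (n <= d.+1)%N) (htau : 0 < tau) (hc : 0 < c)
  (X : 'I_n -> 'rV[R]_d) (hX : sphere_config X)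
  (hmin : forall Y : 'I_n -> 'rV[R]_d, sphere_config Y -> loss tau c X <= loss tau c Y) :
  \sum_(i < n) X i = 0 /\
  (forall i j : 'I_n, i != j -> dotp (X i) (X j) = - (n.-1%:R)^-1).
Proof.
have [Y [Y_sphere Y_regular]] := regular_simplex_exists R hn2 hnd.
apply: (loss_le_simplex_loss_regular hn2 htau hc hX).
by rewrite -(@loss_regular_simplex R d n tau c Y Y_regular); apply: hmin.
Qed.
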